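(* In a combinatorial auction with single-dimensional signals $s_i\in\{0,1,\dots,k-1\}$ ($k\ge2$) and SOS valuations, fix a true signal profile $\mathbf{s}$ (reported truthfully) and a welfare-maximizing allocation $T^*=(T_i^* )_i$ at $\mathbf{s}$. Then the expected welfare $\mathbb{E}[\sum_i v_{i\bar T_i}(\mathbf{s})]$ of the Random Threshold mechanism is at least $\frac{1}{k-1}\mathsf{SELF}$, where $\mathsf{SELF}=\sum_{\ell=1}^{k-1}\sum_{i:s_i=\ell}v_{iT_i^*}(\mathbf{0}_{-i},s_i)$.
   Context: Setting: $n$ agents, $m$ items; agent $i$ has private signal $s_i$; her value for bundle $T\subseteq[m]$ is $v_{iT}(\mathbf{s})\ge0$, a public function of $\mathbf{s}=(s_1,\dots,s_n)$, weakly increasing in each coordinate and strictly increasing in $s_i$; each $v_{iT}$ is SOS. An allocation assigns disjoint bundles. SOS: for every coordinate $j$, $s_j$, $\delta\ge0$, and $\mathbf{s}'_{-j}\le\mathbf{s}_{-j}$ coordinate-wise, $v(\mathbf{s}'_{-j},s_j+\delta)-v(\mathbf{s}'_{-j},s_j)\ge v(\mathbf{s}_{-j},s_j+\delta)-v(\mathbf{s}_{-j},s_j)$. $(\mathbf{0}_{-i},s_i)$ is the profile with all signals except $i$'s set to $0$. Random Threshold (on reports $\mathbf{s}$): choose $\ell$ uniformly in $\{1,\dots,k-1\}$; $N_{\ge\ell}=\{i:s_i\ge\ell\}$, $N_{<\ell}=[n]\setminus N_{\ge\ell}$; for $i\in N_{\ge\ell}$ set $\bar v_{iT}=v_{iT}(\mathbf{s}_{N_{<\ell}},\boldsymbol{\ell}_{N_{\ge\ell}})$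 (signals of all agents in $N_{\ge\ell}$ replaced by $\ell$), for $i\in N_{<\ell}$ set $\bar v_{iT}=0$; choose $\bar T\in\arg\max\sum_{i\in N_{\ge\ell}}\bar v_{i\bar T_i}$ over allocations to agents of $N_{\ge\ell}$; an agent receiving $\bar T_i$ pays $v_{i\bar T_i}(\mathbf{s}_{-i},\ell-1)$. *)

From HB Require Import structures.
From mathcomp Require Import all_boot all_order all_algebra.
Set Implicit Arguments. Unset Strict Implicit. Unset Printing Implicit Defensive.
Import Order.TTheory GRing.Theory Num.Theory.
Local Open Scope ring_scope.

(* Agents are 'I_n, items 'I_m, signals take values in 'I_k = {0,...,k-1}. *)
Definition profile (n k : nat) := 'I_n -> 'I_k.

(* valuation: v i T s = v_{iT}(s) *)
Definition valuation (R : realFieldType) (n m k : nat) :=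
  'I_n -> {set 'I_m} -> profile n k -> R.

Definition upd n k (s : profile n k) (j : 'I_n) (x : 'I_k) : profile n k :=
  fun i => if i == j then x else s i.

Definition zero_prof n k (hk : (0 < k)%N) : profile n k := fun _ => Ordinal hk.

Definition prof_le n k (s s' : profile n k) := forall i, (s i <= s' i)%N.

Definition val_nonneg R n m k (v : valuation R n m k) :=
  forall i T s, 0 <= v i T s.

Definition val_weakly_increasing R n m k (v : valuation R n m k) :=
  forall i T s s', prof_le s s' -> v i T s <= v i T s'.

Definition val_strict_own R n m k (v : valuation R n m k) :=
  forall i T s (a b : 'I_k), (a < b)%N -> v i T (upd s i a) < v i T (upd s i b).

Definition SOS n k (R : realFieldType) (f : profile n k -> R) :=
  forall (j : 'I_n) (s s' : profile n k) (a b : 'I_k),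
    (forall i, i != j -> (s' i <= s i)%N) -> (a <= b)%N ->
    f (upd s' j b) - f (upd s' j a) >= f (upd s j b) - f (upd s j a).

Definition val_SOS R n m k (v : valuation R n m k) :=
  forall i T, SOS (v i T).

Definition is_allocation n m (A : 'I_n -> {set 'I_m}) :=
  forall i j, i != j -> [disjoint A i & A j].

Definition welfare R n m k (v : valuation R n m k) (A : 'I_n -> {set 'I_m})
  (s : profile n k) : R := \sum_i v i (A i) s.

Definition thr_prof n k (s : profile n k) (l : 'I_k) : profile n k :=
  fun i => if (l <= s i)%N then l else s i.

Definition vbar R n m k (v : valuation R n m k) (s : profile n k) (l : 'I_k)
  (i : 'I_n) (T : {set 'I_m}) : R :=
  if (l <= s i)%N then v i T (thr_prof s l) else 0.

Definition alloc_to_thr n m k (s : profile n k) (l : 'I_k) (A : 'I_n -> {set 'I_m}) :=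
  is_allocation A /\ forall i, (s i < l)%N -> A i = set0.

Definition RT_choice R n m k (v : valuation R n m k) (s : profile n k) (l : 'I_k)
  (A : 'I_n -> {set 'I_m}) :=
  alloc_to_thr s l A /\
  forall B, alloc_to_thr s l B ->
    \sum_(i | (l <= s i)%N) vbar v s l i (B i)
      <= \sum_(i | (l <= s i)%N) vbar v s l i (A i).

Definition SELF R n m k (hk : (0 < k)%N) (v : valuation R n m k) (s : profile n k)
  (Tstar : 'I_n -> {set 'I_m}) : R :=
  \sum_(l : 'I_k | (0 < l)%N) \sum_(i | s i == l)
     v i (Tstar i) (upd (@zero_prof n k hk) i (s i)).

From HB Require Import structures.
From mathcomp Require Import all_boot all_order all_algebra.
Set Implicit Arguments. Unset Strict Implicit. Unset Printing Implicit Defensive.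
Import Order.TTheory GRing.Theory Num.Theory.
Local Open Scope ring_scope.

(* The bound holds threshold by threshold: for every level
   l >= 1, the welfare at the true signals of the allocation chosen with
   threshold l dominates the contribution of the agents with s_i = l to
   SELF.  Indeed
   - lowering signals to the threshold profile can only lower values
     (monotonicity), so the true welfare of any allocation dominates its
     "threshold welfare" sum_{i in N_{>=l}} vbar_{i A_i};
   - the restriction of T* to the agents with s_i = l is an admissible
     allocation to N_{>=l}, so by optimality of the chosen allocation its
     threshold welfare is a lower bound;
   - for an agent with s_i = l the threshold profile keeps her signal and
     only raises the others above 0, so vbar_{i T*_i} >= v_{i T*_i}(0_{-i}, l).
   Summing over l and scaling by 1/(k-1) gives the theorem. *)

Section ThresholdBound.

Variables (R : realFieldType) (n m k : nat) (v : valuation R n m k).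
Hypotheses (hnn : val_nonneg v) (hmono : val_weakly_increasing v).
Variables (s : profile n k) (l : 'I_k).

Lemma thr_prof_le : prof_le (thr_prof s l) s.
Proof. by move=> i; rewrite /thr_prof; case: ifP. Qed.

Lemma vbar_ge0 i T : 0 <= vbar v s l i T.
Proof. by rewrite /vbar; case: ifP. Qed.

Lemma thr_welfare_le_welfare (A : 'I_n -> {set 'I_m}) :
  \sum_(i | (l <= s i)%N) vbar v s l i (A i) <= welfare v A s.
Proof.
rewrite /welfare [X in _ <= X](bigID (fun i => (l <= s i)%N)) /=.
rewrite -[X in X <= _]addr0; apply: lerD.
  by apply: ler_sum => i hi; rewrite /vbar hi; apply/hmono/thr_prof_le.
by apply: sumr_ge0 => i _; apply: hnn.
Qed.

Definition level_restrict (T : 'I_n -> {set 'I_m}) (i : 'I_n) : {set 'I_m} :=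
  if s i == l then T i else set0.

Lemma level_restrict_to_thr (T : 'I_n -> {set 'I_m}) :
  is_allocation T -> alloc_to_thr s l (level_restrict T).
Proof.
move=> hT; split.
  move=> i j hij; rewrite /level_restrict.
  case: (s i == l); case: (s j == l); first exact: hT;
    by rewrite -setI_eq0 ?setI0 ?set0I.
by move=> i hi; rewrite /level_restrict; case: eqP hi => // ->; rewrite ltnn.
Qed.

Lemma level_self_le_thr_welfare (hk : (0 < k)%N) (T : 'I_n -> {set 'I_m}) :
  \sum_(i | s i == l) v i (T i) (upd (zero_prof hk) i (s i))
    <= \sum_(i | (l <= s i)%N) vbar v s l i (level_restrict T i).
Proof.
rewrite big_mkcond [X in _ <= X]big_mkcond /=; apply: ler_sum => i _.
case: eqP => [si_l|_]; last by case: ifP => // _; apply: vbar_ge0.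
rewrite si_l leqnn /vbar /level_restrict si_l leqnn eqxx.
apply: hmono => j; rewrite /upd /thr_prof.
by case: eqP => [->|_] /=; rewrite ?si_l ?leqnn.
Qed.

Lemma level_self_le_RT_welfare (hk : (0 < k)%N) (T A : 'I_n -> {set 'I_m}) :
  is_allocation T -> RT_choice v s l A ->
  \sum_(i | s i == l) v i (T i) (upd (zero_prof hk) i (s i)) <= welfare v A s.
Proof.
move=> hT [_ hAopt].
apply: le_trans (level_self_le_thr_welfare hk T) _.
exact: le_trans (hAopt _ (level_restrict_to_thr hT)) (thr_welfare_le_welfare A).
Qed.

End ThresholdBound.

Theorem mainTheorem6 (R : realFieldType) (n m k : nat) (hk : (2 <= k)%N)
  (v : valuation R n m k)
  (hnn : val_nonneg v) (hmono : val_weakly_increasing v)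
  (hstrict : val_strict_own v) (hsos : val_SOS v)
  (s : profile n k) (Tstar : 'I_n -> {set 'I_m})
  (hTstar : is_allocation Tstar)
  (hopt : forall A, is_allocation A -> welfare v A s <= welfare v Tstar s)
  (Tbar : 'I_k -> 'I_n -> {set 'I_m})
  (hTbar : forall l : 'I_k, (0 < l)%N -> RT_choice v s l (Tbar l)) :
  ((k - 1)%:R)^-1 * SELF (ltnW hk) v s Tstar
    <= ((k - 1)%:R)^-1 * \sum_(l : 'I_k | (0 < l)%N) welfare v (Tbar l) s.
Proof.
apply: ler_wpM2l; first by rewrite invr_ge0 ler0n.
rewrite /SELF; apply: ler_sum => l l_gt0.
exact: (level_self_le_RT_welfare hnn hmono (ltnW hk) hTstar (hTbar l l_gt0)).
Qed.
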